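(* Let $\xi_{\{\mu\}},\xi_{\{\sigma\}}$ be global conformal Killing vector fields on $\mathbb{E}^2$ with parameters $\mu=(\mu_0,\mu_1,\mu_2)$ and $\sigma=(\sigma_0,\sigma_1,\sigma_2)$, and assume $\xi_{\{\mu\}}$ is not the zero vector field. Then: 1. $\xi_{\{\sigma\}}$ is everywhere orthogonal (with respect to $g_E$) to $\xi_{\{\mu\}}$ if and only if $\sigma=i\,r\,\mu$ for some $r\in\mathbb{R}$. 2. $\xi_{\{\sigma\}}$ commutes with $\xi_{\{\mu\}}$ if and only if $\sigma=c\,\mu$ for some $c\in\mathbb{C}$. Moreover, for every $c\in\mathbb{C}$ and every $p\in\mathbb{E}^2$, $g_E(\xi_{\{c\mu\}},\xi_{\{c\mu\}})|_p=|c|^2\,g_E(\xi_{\{\mu\}},\xi_{\{\mu\}})|_p$.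
   Context: $\mathbb{E}^2$ is the Euclidean plane with Cartesian coordinates $\{x,y\}$ and metric $g_E=dx^2+dy^2$; set $z=\frac12(x-iy)$, so $g_E=4\,dz\,d\bar z$. For $\mu=(\mu_0,\mu_1,\mu_2)\in\mathbb{C}^3$ the global conformal Killing vector (GCKV) with parameters $\mu$ is $\xi_{\{\mu\}}=(\mu_0+\mu_1z+\frac12\mu_2z^2)\partial_z+(\bar\mu_0+\bar\mu_1\bar z+\frac12\bar\mu_2\bar z^2)\partial_{\bar z}$; these are exactly the conformal Killing vectors of $g_E$ that extend smoothly to the Riemann sphere. *)

From Stdlib Require Import Reals.
From Coquelicot Require Import Coquelicot.

Open Scope R_scope.

Definition cparam : Type := (C * C * C)%type.
Definition par0 (m : cparam) : C := fst (fst m).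
Definition par1 (m : cparam) : C := snd (fst m).
Definition par2 (m : cparam) : C := snd m.
Definition mkpar (a b c : C) : cparam := (a, b, c).

Definition cscale (c : C) (m : cparam) : cparam :=
  mkpar (Cmult c (par0 m)) (Cmult c (par1 m)) (Cmult c (par2 m)).

(* A vector field on E^2, given by its Cartesian components (X^x, X^y)
   (i.e. X = X^x d_x + X^y d_y) at the point (x, y). *)
Definition vfield : Type := R -> R -> R * R.

Definition zcoord (x y : R) : C := (x / 2, - y / 2).

Definition gckv_coef (m : cparam) (z : C) : C :=
  Cplus (Cplus (par0 m) (Cmult (par1 m) z))
        (Cmult (Cmult (RtoC (/2)) (par2 m)) (Cmult z z)).

(* With x = z + zbar, y = i (z - zbar) we have
   d_z = d_x + i d_y and d_zbar = d_x - i d_y, so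
   xi = f d_z + conj f d_zbar
      = (f + conj f) d_x + (i f - i conj f) d_y  (both coefficients real). *)
Definition gckv (m : cparam) : vfield :=
  fun x y =>
    let f := gckv_coef m (zcoord x y) in
    (Re (Cplus f (Cconj f)),
     Re (Cminus (Cmult Ci f) (Cmult Ci (Cconj f)))).

Definition gE (v w : R * R) : R := fst v * fst w + snd v * snd w.

Definition dx (F : vfield) (x y : R) : R * R :=
  (Derive (fun t => fst (F t y)) x, Derive (fun t => snd (F t y)) x).
Definition dy (F : vfield) (x y : R) : R * R :=
  (Derive (fun t => fst (F x t)) y, Derive (fun t => snd (F x t)) y).

Definition lie (X Y : vfield) : vfield :=
  fun x y =>
    (fst (X x y) * fst (dx Y x y) + snd (X x y) * fst (dy Y x y)
     - (fst (Y x y) * fst (dx X x y) + snd (Y x y) * fst (dy X x y)),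
     fst (X x y) * snd (dx Y x y) + snd (X x y) * snd (dy Y x y)
     - (fst (Y x y) * snd (dx X x y) + snd (Y x y) * snd (dy X x y))).

Definition is_zero_field (X : vfield) : Prop := forall x y, X x y = (0, 0).
Definition everywhere_orthogonal (X Y : vfield) : Prop :=
  forall x y, gE (X x y) (Y x y) = 0.
Definition commute_fields (X Y : vfield) : Prop := is_zero_field (lie X Y).

(* With f_mu(z) = mu0 + mu1 z + mu2 z^2/2, the field xi_mu has Cartesian
   components (2 Re f_mu, -2 Im f_mu).  Hence g_E(xi_s, xi_m) = 4 Re (f_s conj f_m),
   and, f being holomorphic, [xi_s, xi_m] is built in the same way from the
   Wronskian f_s f_m' - f_m f_s' = (s0 m1 - s1 m0) + (s0 m2 - s2 m0) z
   + (s1 m2 - s2 m1) z^2/2.  So the fields commute iff all 2x2 minors of (s; m)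
   vanish, i.e. iff s is a multiple of m.  Orthogonality kills every coefficient
   s_j conj m_k + m_j conj s_k of the real quadratic form Re (f_s conj f_m); these
   relations again force the minors to vanish, and the diagonal one says that the
   ratio s/m is purely imaginary. *)

From Stdlib Require Import Reals Lra Classical.
From Coquelicot Require Import Coquelicot.

Open Scope R_scope.

(* Every index j >= 2 denotes the last parameter. *)
Definition par (m : cparam) (j : nat) : C :=
  match j with 0 => par0 m | 1 => par1 m | _ => par2 m end.

Definition par_minor (s m : cparam) (j k : nat) : C :=
  (par s j * par m k - par s k * par m j)%C.

Lemma par_cscale c m j : par (cscale c m) j = Cmult c (par m j).
Proof. now destruct j as [|[|j]]. Qed.

Lemma gckv_coef_cscale c m z : gckv_coef (cscale c m) z = Cmult c (gckv_coef m z).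
Proof. unfold gckv_coef, cscale, mkpar, par0, par1, par2; simpl; ring. Qed.

Lemma zcoord_re_im (z : C) : zcoord (2 * Re z) (-2 * Im z) = z.
Proof. destruct z as [a b]; unfold zcoord; simpl; f_equal; field. Qed.

Lemma re_im_pair_eq0 (w : C) : (2 * Re w, -2 * Im w) = (0, 0) <-> w = RtoC 0.
Proof.
  destruct w as [a b]; simpl; split.
  - intros E; injection E; intros; unfold RtoC; f_equal; lra.
  - intros E; injection E; intros -> ->; f_equal; ring.
Qed.

Lemma re_eq0_imag (c : C) : Re c = 0 -> c = Cmult Ci (RtoC (Im c)).
Proof.
  destruct c as [a b]; simpl; intros ->.
  unfold Cmult, Ci, RtoC; simpl; f_equal; ring.
Qed.

Lemma C_quadratic_eq0 (a b c : C) :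
  (forall z, a + b * z + c * (z * z) = 0)%C -> a = RtoC 0 /\ b = RtoC 0 /\ c = RtoC 0.
Proof.
  intros H.
  pose proof (H (RtoC 0)) as H0; pose proof (H (RtoC 1)) as H1;
    pose proof (H (RtoC (-1))) as H2.
  destruct a as [a1 a2], b as [b1 b2], c as [c1 c2].
  unfold Cplus, Cmult, RtoC in *; simpl in *.
  injection H0; injection H1; injection H2; intros.
  repeat split; f_equal; lra.
Qed.

Lemma gckv_re_im m x y :
  gckv m x y =
  (2 * Re (gckv_coef m (zcoord x y)), -2 * Im (gckv_coef m (zcoord x y))).
Proof.
  unfold gckv; destruct (gckv_coef m (zcoord x y)) as [a b]; simpl; f_equal; ring.
Qed.

Lemma exists_par_neq0 m : ~ is_zero_field (gckv m) -> exists k, par m k <> RtoC 0.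
Proof.
  intros Hnz; apply NNPP; intros Hall; apply Hnz; intros x y.
  pose proof (not_ex_not_all _ _ Hall) as Hpar.
  rewrite gckv_re_im, re_im_pair_eq0; unfold gckv_coef.
  change (par0 m) with (par m 0); change (par1 m) with (par m 1);
    change (par2 m) with (par m 2).
  rewrite !Hpar; ring.
Qed.

Lemma gE_gckv s m x y :
  gE (gckv s x y) (gckv m x y) =
  4 * Re (gckv_coef s (zcoord x y) * Cconj (gckv_coef m (zcoord x y))).
Proof.
  unfold gE; rewrite !gckv_re_im.
  destruct (gckv_coef s (zcoord x y)), (gckv_coef m (zcoord x y)); simpl; ring.
Qed.

Definition gckv_coef_deriv (m : cparam) (z : C) : C :=
  Cplus (par1 m) (Cmult (par2 m) z).

Definition gckv_wronskian (s m : cparam) (z : C) : C :=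
  (gckv_coef s z * gckv_coef_deriv m z - gckv_coef m z * gckv_coef_deriv s z)%C.

Lemma dx_gckv m x y :
  dx (gckv m) x y =
  (Re (gckv_coef_deriv m (zcoord x y)), - Im (gckv_coef_deriv m (zcoord x y))).
Proof.
  destruct m as [[[a0 b0] [a1 b1]] [a2 b2]].
  unfold dx; f_equal; apply is_derive_unique;
    unfold gckv, gckv_coef, gckv_coef_deriv, zcoord, par0, par1, par2; simpl;
    auto_derive; trivial; field.
Qed.

Lemma dy_gckv m x y :
  dy (gckv m) x y =
  (Im (gckv_coef_deriv m (zcoord x y)), Re (gckv_coef_deriv m (zcoord x y))).
Proof.
  destruct m as [[[a0 b0] [a1 b1]] [a2 b2]].
  unfold dy; f_equal; apply is_derive_unique;
    unfold gckv, gckv_coef, gckv_coef_deriv, zcoord, par0, par1, par2; simpl;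
    auto_derive; trivial; field.
Qed.

Lemma lie_gckv s m x y :
  lie (gckv s) (gckv m) x y =
  (2 * Re (gckv_wronskian s m (zcoord x y)), -2 * Im (gckv_wronskian s m (zcoord x y))).
Proof.
  unfold lie, gckv_wronskian; rewrite !dx_gckv, !dy_gckv, !gckv_re_im.
  destruct (gckv_coef s (zcoord x y)), (gckv_coef m (zcoord x y)),
    (gckv_coef_deriv s (zcoord x y)), (gckv_coef_deriv m (zcoord x y)).
  simpl; f_equal; ring.
Qed.

Lemma gckv_wronskian_expand s m z :
  gckv_wronskian s m z =
  (par_minor s m 0 1 + par_minor s m 0 2 * z + par_minor s m 1 2 / 2 * (z * z))%C.
Proof.
  unfold gckv_wronskian, gckv_coef, gckv_coef_deriv, par_minor, par.
  rewrite RtoC_inv by discrR.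
  field; intros E; injection E; discrR.
Qed.

Lemma par_minors_eq0 s m :
  par_minor s m 0 1 = RtoC 0 -> par_minor s m 0 2 = RtoC 0 -> par_minor s m 1 2 = RtoC 0 ->
  forall j k, par_minor s m j k = RtoC 0.
Proof.
  intros H01 H02 H12 j k; unfold par_minor in *.
  destruct j as [|[|j]], k as [|[|k]]; simpl in *;
    first [ assumption | ring
          | match goal with H : ?e = _ |- _ =>
              transitivity (Copp e); [ring | rewrite H; ring] end ].
Qed.

Lemma par_minor_cscale c m j k : par_minor (cscale c m) m j k = RtoC 0.
Proof. unfold par_minor; rewrite !par_cscale; ring. Qed.

Lemma cscale_of_par_minor_eq0 s m k :
  par m k <> RtoC 0 -> (forall j, par_minor s m j k = RtoC 0) ->
  exists c, s = cscale c m.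
Proof.
  intros Hk Hminor; exists (par s k / par m k)%C.
  assert (Hj : forall j, par s j = (par s k / par m k * par m j)%C).
  { intros j.
    replace (par s j)
      with (par_minor s m j k / par m k + par s k / par m k * par m j)%C
      by (unfold par_minor; field; exact Hk).
    rewrite Hminor; field; exact Hk. }
  transitivity (mkpar (par s 0) (par s 1) (par s 2)).
  - destruct s as [[s0 s1] s2]; reflexivity.
  - rewrite (Hj 0%nat), (Hj 1%nat), (Hj 2%nat); reflexivity.
Qed.

Lemma commute_gckv_iff_par_minors s m :
  commute_fields (gckv s) (gckv m) <-> forall j k, par_minor s m j k = RtoC 0.
Proof.
  split.
  - intros H.
    assert (Hw : forall z, (par_minor s m 0 1 + par_minor s m 0 2 * z
                            + par_minor s m 1 2 / 2 * (z * z))%C = RtoC 0).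
    { intros z.
      rewrite <- gckv_wronskian_expand, <- (zcoord_re_im z), <- re_im_pair_eq0,
        <- lie_gckv.
      apply H. }
    destruct (C_quadratic_eq0 _ _ _ Hw) as [H01 [H02 H12]].
    apply par_minors_eq0; trivial.
    replace (par_minor s m 1 2) with (par_minor s m 1 2 / 2 * 2)%C
      by (field; intros E; injection E; discrR).
    rewrite H12; ring.
  - intros Hminor x y.
    rewrite lie_gckv, re_im_pair_eq0, gckv_wronskian_expand, !Hminor.
    unfold Cdiv; ring.
Qed.

(* Up to the factor c_j c_k (c = (1, 1, 1/2)), the coefficient of z^j conj(z)^k
   in f_s conj f_m + conj f_s f_m = 2 Re (f_s conj f_m). *)
Definition par_herm (s m : cparam) (j k : nat) : C :=
  (par s j * Cconj (par m k) + par m j * Cconj (par s k))%C.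

(* The nine sample points z = 0, 1, -1, 2, -2, i, -i, 2i, 1+i determine the nine
   real coefficients of the real quadratic form Re (f_s conj f_m). *)
Lemma orthogonal_par_herm_eq0 s m :
  everywhere_orthogonal (gckv s) (gckv m) -> forall j k, par_herm s m j k = RtoC 0.
Proof.
  intros H.
  pose proof (H 0 0); pose proof (H 2 0); pose proof (H (-2) 0);
  pose proof (H 4 0); pose proof (H (-4) 0); pose proof (H 0 (-2));
  pose proof (H 0 2); pose proof (H 0 (-4)); pose proof (H 2 (-2)).
  destruct s as [[[a0 b0] [a1 b1]] [a2 b2]], m as [[[c0 d0] [c1 d1]] [c2 d2]].
  rewrite !gE_gckv in *.
  unfold gckv_coef, zcoord, par0, par1, par2 in *; simpl in *.
  intros j k.
  destruct j as [|[|j]], k as [|[|k]];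
    unfold par_herm, par, par0, par1, par2, Cconj, Cmult, Cplus, RtoC; simpl;
    f_equal; lra.
Qed.

Lemma par_minor_eq0_of_par_herm_eq0 s m k :
  par m k <> RtoC 0 -> (forall j, par_herm s m j k = RtoC 0) ->
  forall j, par_minor s m j k = RtoC 0.
Proof.
  intros Hk Hherm j.
  assert (Hk' : Cconj (par m k) <> RtoC 0).
  { intros E; apply Hk; rewrite <- (Cconj_conj (par m k)), E.
    unfold Cconj, RtoC; simpl; f_equal; ring. }
  replace (par_minor s m j k)
    with ((par m k * par_herm s m j k - par m j * par_herm s m k k) / Cconj (par m k))%C
    by (unfold par_minor, par_herm; field; exact Hk').
  rewrite !Hherm; field; exact Hk'.
Qed.

Lemma par_herm_cscale_diag c m k :
  par_herm (cscale c m) m k k = RtoC (2 * Re c * Cmod (par m k) ^ 2).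
Proof.
  unfold par_herm; rewrite par_cscale.
  destruct c as [a b], (par m k) as [u v]; unfold Cmod.
  rewrite pow2_sqrt by nra.
  unfold Cconj, Cmult, Cplus, RtoC; simpl; f_equal; ring.
Qed.

Lemma orthogonal_gckv_imag_multiple s m k :
  par m k <> RtoC 0 -> everywhere_orthogonal (gckv s) (gckv m) ->
  exists r : R, s = cscale (Cmult Ci (RtoC r)) m.
Proof.
  intros Hk Horth.
  pose proof (orthogonal_par_herm_eq0 s m Horth) as Hherm.
  destruct (cscale_of_par_minor_eq0 s m k Hk
              (par_minor_eq0_of_par_herm_eq0 s m k Hk (fun j => Hherm j k))) as [c ->].
  assert (Hre : Re c = 0).
  { pose proof (Hherm k k) as Hkk.
    rewrite par_herm_cscale_diag in Hkk; apply RtoC_inj in Hkk.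
    assert (0 < Cmod (par m k) ^ 2) by (apply pow_lt, Cmod_gt_0, Hk).
    nra. }
  exists (Im c); now rewrite <- (re_eq0_imag c Hre).
Qed.

Lemma orthogonal_gckv_imag_cscale r m :
  everywhere_orthogonal (gckv (cscale (Cmult Ci (RtoC r)) m)) (gckv m).
Proof.
  intros x y; rewrite gE_gckv, gckv_coef_cscale.
  destruct (gckv_coef m (zcoord x y)); simpl; ring.
Qed.

Lemma gE_gckv_cscale c m x y :
  gE (gckv (cscale c m) x y) (gckv (cscale c m) x y)
  = Cmod c ^ 2 * gE (gckv m x y) (gckv m x y).
Proof.
  rewrite !gE_gckv, gckv_coef_cscale.
  destruct c as [a b], (gckv_coef m (zcoord x y)) as [u v]; unfold Cmod.
  rewrite pow2_sqrt by nra.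
  simpl; ring.
Qed.

Theorem lemma5p1 (mu sigma : cparam) :
  ~ is_zero_field (gckv mu) ->
  (everywhere_orthogonal (gckv sigma) (gckv mu) <->
     exists r : R, sigma = cscale (Cmult Ci (RtoC r)) mu) /\
  (commute_fields (gckv sigma) (gckv mu) <->
     exists c : C, sigma = cscale c mu) /\
  (forall (c : C) (x y : R),
     gE (gckv (cscale c mu) x y) (gckv (cscale c mu) x y)
     = (Cmod c ^ 2 * gE (gckv mu x y) (gckv mu x y))%R).
Proof.
  intros Hnz; destruct (exists_par_neq0 mu Hnz) as [k Hk].
  split; [|split].
  - split.
    + exact (orthogonal_gckv_imag_multiple sigma mu k Hk).
    + intros [r ->]; apply orthogonal_gckv_imag_cscale.
  - rewrite commute_gckv_iff_par_minors; split.
    + intros Hminor; exact (cscale_of_par_minor_eq0 sigma mu k Hk (fun j => Hminor j k)).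
    + intros [c ->]; apply par_minor_cscale.
  - intros c x y; apply gE_gckv_cscale.
Qed.
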